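(* Let $d\ge 1$, let $(\mathbb{E},\mathcal{E})$ be a measurable space, let $\Phi:\mathbb{R}^d\times\mathbb{E}\to\mathbb{R}^d$ be measurable and let $\varepsilon_1$ be a random element of $\mathbb{E}$. Assume the following condition holds: there exists a measurable map $\phi:\mathbb{S}^{d-1}\times\mathbb{E}\to\mathbb{R}^d$ such that for all $e\in\mathbb{E}$, $\lim_{x\to\infty}x^{-1}\Phi(x s(x),e)=\phi(s,e)$ whenever $s(x)\to s$ in $\mathbb{S}^{d-1}$; and moreover, if $\Pr(\phi(s,\varepsilon_1)=0)>0$ for some $s\in\mathbb{S}^{d-1}$, then $\Pr(\varepsilon_1\in\mathbb{W})=1$ for a measurable set $\mathbb{W}\subset\mathbb{E}$ such that for all $e\in\mathbb{W}$, $\sup_{\|y\|\le x}\|\Phi(y,e)\|=O(x)$ as $x\to\infty$. Extend $\phi$ to $\mathbb{R}^d\times\mathbb{E}$ by $\phi(v,e)=\|v\|\,\phi(v/\|v\|,e)$ for $v\neq 0$ and $\phi(0,e)=0$. Then $\lim_{x\to\infty}x^{-1}\Phi(x v(x),e)=\phi(v,e)$ whenever $v(x)\to v\in\mathbb{R}^d\setminus\{0\}$ and $e\in\mathbb{E}$. If $\Pr(\phi(s,\varepsilon_1)=0)>0$ for some $s\in\mathbb{S}^{d-1}$, then this limit relation also holds for $v(x)\to v=0$ and $e\in\mathbb{W}$.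
   Context: $\|\cdot\|$ denotes the Euclidean norm on $\mathbb{R}^d$ and $\mathbb{S}^{d-1}=\{x\in\mathbb{R}^d:\|x\|=1\}$. *)

From HB Require Import structures.
From mathcomp Require Import all_boot all_order all_algebra.
From mathcomp Require Import all_classical all_reals all_analysis.
Set Implicit Arguments. Unset Strict Implicit. Unset Printing Implicit Defensive.
Import Order.TTheory GRing.Theory Num.Theory.
Import numFieldNormedType.Exports.
Local Open Scope classical_set_scope.
Local Open Scope ring_scope.

(* R^d is represented by row vectors 'rV[R]_d (with their standard topology). *)

Definition enorm (R : realType) (d : nat) (v : 'rV[R]_d) : R :=
  Num.sqrt (\sum_(i < d) v 0 i ^+ 2).

Definition sphere (R : realType) (d : nat) : set 'rV[R]_d :=
  [set v | enorm v = 1].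

(* Borel sigma-algebra on R^d: transported from the product sigma-algebra
   on d.-tuple R (which coincides with the Borel sigma-algebra of R^d). *)
Definition rv_to_tuple (R : realType) (d : nat) (v : 'rV[R]_d) : d.-tuple R :=
  [tuple v 0 i | i < d].
Definition tuple_to_rv (R : realType) (d : nat) (t : d.-tuple R) : 'rV[R]_d :=
  \row_(i < d) tnth t i.

Definition measurable_Rd_fun (R : realType) (d : nat) (dE : measure_display)
  (E : measurableType dE) (D : set ('rV[R]_d * E)) (f : 'rV[R]_d * E -> 'rV[R]_d) :=
  measurable_fun ((fun p : d.-tuple R * E => (tuple_to_rv p.1, p.2)) @^-1` D)
    (fun p : d.-tuple R * E => rv_to_tuple (f (tuple_to_rv p.1, p.2))).

Definition phi_ext (R : realType) (d : nat) (E : Type)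
  (phi : 'rV[R]_d * E -> 'rV[R]_d) (v : 'rV[R]_d) (e : E) : 'rV[R]_d :=
  if v == 0 then 0 else enorm v *: phi ((enorm v)^-1 *: v, e).

From HB Require Import structures.
From mathcomp Require Import all_boot all_order all_algebra.
From mathcomp Require Import all_classical all_reals all_analysis.
Import Order.TTheory GRing.Theory Num.Theory.
Import numFieldNormedType.Exports.
Local Open Scope classical_set_scope.
Local Open Scope ring_scope.

(* For v != 0 write v(x) = |v(x)| s(x) with s(x) on the sphere, so that
   x^-1 Phi(x v(x)) = |v(x)| (x |v(x)|)^-1 Phi((x |v(x)|) s(x)).  Since the
   hypothesis only controls y^-1 Phi(y s(y)) along the diagonal y = x, it is
   upgraded to joint convergence as y -> +oo and s -> s0 on the sphere: if that
   failed, a sequence of bad points (y_n, s_n) with s_n -> s0 could be glued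
   into one path s with s(y_n) = s_n, contradicting the hypothesis.  Joint
   convergence then applies to y = x |v(x)| -> +oo.  For v = 0 and e in W, the
   linear growth bound gives |Phi(x v(x))| <= C x eta once |v(x)| <= eta. *)

Section euclidean_norm.
Context {R : realType} {d : nat}.
Implicit Types v : 'rV[R]_d.

Lemma enorm_ge0 v : 0 <= enorm v.
Proof. exact: sqrtr_ge0. Qed.

Lemma enorm0 : enorm (0 : 'rV[R]_d) = 0.
Proof. by rewrite /enorm big1 ?sqrtr0 // => i _; rewrite mxE expr0n. Qed.

Lemma enormZ (a : R) v : enorm (a *: v) = `|a| * enorm v.
Proof.
rewrite /enorm; under eq_bigr => i _ do rewrite mxE exprMn.
by rewrite -mulr_sumr sqrtrM ?sqr_ge0 // sqrtr_sqr.
Qed.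

Lemma coord_le_enorm v i : `|v 0 i| <= enorm v.
Proof.
rewrite -sqrtr_sqr; apply: ler_wsqrtr.
by rewrite (bigD1 i) //= lerDl; apply: sumr_ge0 => j _; exact: sqr_ge0.
Qed.

Lemma norm_le_enorm v : `|v| <= enorm v.
Proof.
rewrite [leLHS]/Num.Def.normr /= mx_normrE; apply: bigmax_le => [|[a j] _].
  exact: enorm_ge0.
by rewrite /= (ord1 a); exact: coord_le_enorm.
Qed.

Lemma enorm_eq0 v : (enorm v == 0) = (v == 0).
Proof.
apply/eqP/eqP => [v0|->]; last exact: enorm0.
by apply/eqP; rewrite -normr_le0 -v0 norm_le_enorm.
Qed.

Lemma enorm_gt0 v : (0 < enorm v) = (v != 0).
Proof. by rewrite lt_neqAle enorm_ge0 andbT eq_sym enorm_eq0. Qed.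

Lemma sphere_normalize v : v != 0 -> sphere ((enorm v)^-1 *: v).
Proof.
rewrite -enorm_gt0 => v_gt0.
by rewrite /sphere /= enormZ gtr0_norm ?invr_gt0 // mulVf ?gt_eqF.
Qed.

Lemma enorm_continuous : continuous (@enorm R d).
Proof.
move=> v; apply: continuous_comp; last exact: sqrt_continuous.
have sqr_coord i : {for v, continuous (fun w : 'rV[R]_d => w 0 i ^+ 2)}.
  exact: (continuous_comp (@coord_continuous R 1 d 0 i v) (@exprn_continuous R 2 _)).
exact: (cvg_big add_continuous _ (fun i (_ : true) => sqr_coord i)).
Qed.

Lemma cvg_enorm {T : Type} {F : set_system T} {FF : Filter F}
    {f : T -> 'rV[R]_d} {v : 'rV[R]_d} :
  f @ F --> v -> enorm (f t) @[t --> F] --> enorm v.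
Proof. exact: (continuous_cvg _ (enorm_continuous v)). Qed.

End euclidean_norm.

Section paths_to_uniformity.
Context {R : realType} {U V : normedModType R}.

Lemma exists_path_through_seq (y : nat -> R) {s : nat -> U} {s0 : U} :
  s n @[n --> \oo] --> s0 ->
  exists p : R -> U, [/\ p x @[x --> +oo] --> s0,
    forall x, p x = s0 \/ exists m, p x = s m &
    forall n, exists m, y m = y n /\ p (y n) = s m].
Proof.
move=> scvg.
pose p x := if pselect (exists n, y n = x) is left h then s (projT1 (cid h))
            else s0.
exists p; split.
- apply/cvgrPdist_lt => e e0.
  have /cvgrPdist_lt /(_ e e0) [N _ s_near] := scvg.
  (* only indices m >= N can have |y m| beyond this bound *)
  exists (\sum_(k < N) `|y k|); split => [|x big_x]; first exact: num_real.
  rewrite /p; case: pselect => [h|_]; last by rewrite subrr normr0.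
  case: cid => m /= ym; apply: s_near; rewrite /= leqNgt; apply/negP => mN.
  have : `|y m| <= \sum_(k < N) `|y k|.
    by rewrite (bigD1 (Ordinal mN)) //= lerDl; exact: sumr_ge0.
  by move=> /(le_trans (ler_norm _)); rewrite ym leNgt big_x.
- move=> x; rewrite /p; case: pselect => [h|_]; last by left.
  by right; exists (projT1 (cid h)).
- move=> n; rewrite /p; case: pselect => [h|[]]; last by exists n.
  by case: cid => m /= ym; exists m.
Qed.

Lemma paths_cvg_uniform {A : set U} {F : R -> U -> V} {s0 : U} {L : V} :
  A s0 ->
  (forall s : R -> U, (forall x, A (s x)) -> s x @[x --> +oo] --> s0 ->
     F x (s x) @[x --> +oo] --> L) ->
  forall eps, 0 < eps -> exists M dl : R, 0 < dl /\
    forall y s, M < y -> A s -> `|s - s0| < dl -> `|L - F y s| < eps.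
Proof.
move=> As0 pathsF eps eps0; apply: contrapT => not_unif.
have bad n : exists ys : R * U, [/\ n%:R < ys.1, A ys.2,
    `|ys.2 - s0| < harmonic n & eps <= `|L - F ys.1 ys.2|].
  apply: contrapT => no_bad; apply: not_unif; exists n%:R, (harmonic n).
  split=> [|y s ny As ds]; first exact: harmonic_gt0.
  by rewrite ltNge; apply/negP => le_eps; apply: no_bad; exists (y, s).
have [ys bad_ys] := choice bad.
have ys2_cvg : (ys n).2 @[n --> \oo] --> s0.
  apply/cvgrPdist_lt => e e0; near=> n; rewrite distrC.
  have [_ _ + _] := bad_ys n; move/lt_trans; apply.
  by near: n; apply: (cvgr_lt 0 (@cvg_harmonic R)).
have [p [p_cvg p_range p_through]] :=
  exists_path_through_seq (fun n => (ys n).1) ys2_cvg.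
have Ap x : A (p x).
  by case: (p_range x) => [->|[m ->]] //; have [] := bad_ys m.
have /cvgrPdist_lt /(_ eps eps0) [M [_ p_near]] := pathsF p Ap p_cvg.
pose n := (Num.truncn `|M|).+1.
have [m [ym pm]] := p_through n.
have [n_lt _ _ _] := bad_ys n.
have M_lt : M < (ys n).1.
  apply: le_lt_trans n_lt; apply: (le_trans (ler_norm _)).
  exact/ltW/truncnS_gt.
have [_ _ _] := bad_ys m; apply/negP; rewrite -ltNge.
by have := p_near _ M_lt; rewrite /= pm -ym.
Unshelve. all: by end_near.
Qed.

Lemma cvg_paths_comp {A : set U} {F : R -> U -> V} {s0 : U} {L : V}
    {T : Type} {G : set_system T} {FG : Filter G} {u : T -> R} {s : T -> U} :
  A s0 ->
  (forall s : R -> U, (forall x, A (s x)) -> s x @[x --> +oo] --> s0 ->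
     F x (s x) @[x --> +oo] --> L) ->
  (forall t, A (s t)) -> u t @[t --> G] --> +oo -> s t @[t --> G] --> s0 ->
  F (u t) (s t) @[t --> G] --> L.
Proof.
move=> As0 pathsF As u_cvg s_cvg; apply/cvgrPdist_lt => eps eps0.
have [M [dl [dl0 unif]]] := paths_cvg_uniform As0 pathsF eps eps0.
near=> t; apply: unif; [|exact: As|].
  by near: t; exact: cvgry_gt.
by rewrite distrC; near: t; move: s_cvg => /cvgrPdist_lt; apply.
Unshelve. all: by end_near.
Qed.

End paths_to_uniformity.

Section scaled_limits.
Context {R : realType} {d : nat}.
Variable G : 'rV[R]_d -> 'rV[R]_d.

Lemma cvg_scaled_nonzero (p : 'rV[R]_d -> 'rV[R]_d) {v0 : 'rV[R]_d}
    {v : R -> 'rV[R]_d} :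
  (forall s0 s, sphere s0 -> (forall x, sphere (s x)) ->
     s x @[x --> +oo] --> s0 -> x^-1 *: G (x *: s x) @[x --> +oo] --> p s0) ->
  v0 != 0 -> v x @[x --> +oo] --> v0 ->
  x^-1 *: G (x *: v x) @[x --> +oo] --> enorm v0 *: p ((enorm v0)^-1 *: v0).
Proof.
move=> sphere_paths v0N0 v_cvg.
set r := enorm v0; set s0 := r^-1 *: v0.
have r_gt0 : 0 < r by rewrite enorm_gt0.
have n_cvg : enorm (v x) @[x --> +oo] --> r by exact: cvg_enorm.
have n_gt : \forall x \near +oo, r / 2 < enorm (v x).
  by apply: (cvgr_gt r n_cvg); rewrite ltr_pdivrMr // ltr_pMr // ltr1n.
have vN0 : \forall x \near +oo, v x != 0.
  apply: filterS n_gt => x; rewrite -enorm_gt0; apply: lt_trans.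
  exact: divr_gt0.
have s0S : sphere s0 by exact: sphere_normalize.
pose s x := if v x == 0 then s0 else (enorm (v x))^-1 *: v x.
have sS x : sphere (s x) by rewrite /s; case: ifPn => // /sphere_normalize.
have s_cvg : s x @[x --> +oo] --> s0.
  apply: cvg_trans (near_eq_cvg _) (cvgZ (cvgV (lt0r_neq0 r_gt0) n_cvg) v_cvg).
  by apply: filterS vN0 => x vxN0; rewrite /s (negbTE vxN0).
have u_cvg : x * enorm (v x) @[x --> +oo] --> +oo.
  apply: (@ger_cvgy _ _ _ _ (fun x => x * (r / 2))); last first.
    exact: gt0_cvgMly (divr_gt0 r_gt0 _) cvg_id.
  near=> x; apply: ler_wpM2l; last by apply/ltW; near: x.
  by near: x; apply: nbhs_pinfty_ge; exact: num_real.
have g_cvg := cvg_paths_comp (F := fun y w => y^-1 *: G (y *: w))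
  s0S (sphere_paths s0 ^~ s0S) sS u_cvg s_cvg.
apply: cvg_trans (near_eq_cvg _) (cvgZ n_cvg (g_cvg _)).
apply: filterS vN0 => x vxN0 /=.
have nN0 : enorm (v x) != 0 by rewrite enorm_eq0.
by rewrite /s (negbTE vxN0) !scalerA mulfK // invfM mulrCA mulfV ?mulr1.
Unshelve. all: by end_near.
Qed.

Lemma cvg_scaled_linear_growth {C M : R} {v : R -> 'rV[R]_d} :
  (forall x, M <= x -> forall y, enorm y <= x -> enorm (G y) <= C * x) ->
  v x @[x --> +oo] --> (0 : 'rV[R]_d) ->
  x^-1 *: G (x *: v x) @[x --> +oo] --> (0 : 'rV[R]_d).
Proof.
move=> growth v_cvg; apply/cvgrPdist_lt => eps eps0.
have K_gt0 : 0 < `|C| + 1 by rewrite ltr_wpDl.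
pose eta := eps / (`|C| + 1).
have eta_gt0 : 0 < eta by rewrite divr_gt0.
have n_cvg : enorm (v x) @[x --> +oo] --> 0.
  by rewrite -(@enorm0 R d); exact: cvg_enorm.
near=> x.
have x_gt0 : 0 < x by near: x; apply: nbhs_pinfty_gt; exact: num_real.
have vx_small : enorm (v x) <= eta by apply/ltW; near: x; exact: (cvgr_lt 0 n_cvg).
have Gx_bound : enorm (G (x *: v x)) <= C * (x * eta).
  apply: growth; first by near: x; exact: cvgry_ge (gt0_cvgMly eta_gt0 cvg_id) M.
  by rewrite enormZ gtr0_norm // ler_wpM2l // ltW.
rewrite sub0r normrN; apply: le_lt_trans (norm_le_enorm _) _.
rewrite enormZ gtr0_norm ?invr_gt0 //.
apply: (le_lt_trans (ler_wpM2l _ Gx_bound)); first by rewrite invr_ge0 ltW.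
rewrite [C * _]mulrCA mulKf ?gt_eqF //.
apply: (le_lt_trans (ler_wpM2r (ltW eta_gt0) (ler_norm C))).
by rewrite -[ltRHS](divfK (lt0r_neq0 K_gt0)) -/eta mulrC ltr_pM2l // ltrDl.
Unshelve. all: by end_near.
Qed.

End scaled_limits.

Theorem lemma2p3 (R : realType) (d : nat) (hd : (1 <= d)%N)
  (dE : measure_display) (E : measurableType dE)
  (dO : measure_display) (Omega : measurableType dO) (P : probability Omega R)
  (eps1 : Omega -> E) (meps1 : measurable_fun setT eps1)
  (Phi : 'rV[R]_d * E -> 'rV[R]_d) (mPhi : measurable_Rd_fun setT Phi)
  (phi : 'rV[R]_d * E -> 'rV[R]_d) (mphi : measurable_Rd_fun (@sphere R d `*` setT) phi)
  (W : set E) :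
  (forall (e : E) (s0 : 'rV[R]_d) (s : R -> 'rV[R]_d),
      @sphere R d s0 -> (forall x, @sphere R d (s x)) ->
      s x @[x --> +oo] --> s0 ->
      (x^-1 *: Phi (x *: s x, e)) @[x --> +oo] --> phi (s0, e)) ->
  ((exists s0 : 'rV[R]_d, @sphere R d s0 /\
       (0 < P [set w | phi (s0, eps1 w) = 0%R])%E) ->
     [/\ measurable W, P (eps1 @^-1` W) = 1%E &
         forall e, W e -> exists C M : R, forall x : R, M <= x ->
           forall y : 'rV[R]_d, enorm y <= x -> enorm (Phi (y, e)) <= C * x]) ->
  (forall (e : E) (v0 : 'rV[R]_d) (v : R -> 'rV[R]_d),
      v0 != 0 -> v x @[x --> +oo] --> v0 ->
      (x^-1 *: Phi (x *: v x, e)) @[x --> +oo] --> phi_ext phi v0 e) /\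
  ((exists s0 : 'rV[R]_d, @sphere R d s0 /\
       (0 < P [set w | phi (s0, eps1 w) = 0%R])%E) ->
   forall (e : E) (v : R -> 'rV[R]_d), W e ->
      v x @[x --> +oo] --> (0 : 'rV[R]_d) ->
      (x^-1 *: Phi (x *: v x, e)) @[x --> +oo] --> phi_ext phi 0 e).
Proof.
move=> sphere_limit atom_growth; split=> [e v0 v v0N0 v_cvg|atom e v We v_cvg].
  rewrite /phi_ext (negbTE v0N0).
  exact: (cvg_scaled_nonzero (fun y => Phi (y, e)) (fun s => phi (s, e))
    (sphere_limit e) v0N0 v_cvg).
have [_ _ growth] := atom_growth atom.
have [C [M Phi_growth]] := growth e We.
rewrite /phi_ext eqxx.
exact: (cvg_scaled_linear_growth (fun y => Phi (y, e)) Phi_growth v_cvg).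
Qed.
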